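(* Let $(\mathbb{P},\le,f)$ be a forcing property for $\mathcal{L}_A$ and $p\in\mathbb{P}$. Then (1) $F_p(\bigvee\Phi)=\sup_{\phi\in\Phi}F^w_p(\phi)$ for every sentence $\bigvee\Phi$ of $\mathcal{L}_A(C)$; (2) $F_p(\sup_x\phi(x))=\sup_{c\in C}F^w_p(\phi(c))$ for every sentence $\sup_x\phi(x)$ of $\mathcal{L}_A(C)$.
   Context: $\mathcal{L}$ is a countable continuous signature; formulas of $\mathcal{L}_{\omega_1,\omega}$ are built from atomic formulas using $\neg$, $\tfrac12$, $\dotplus$, countable conjunctions $\bigwedge$ and $\inf_x$; $\bigvee\Phi$ abbreviates $\neg\bigwedge_{\phi\in\Phi}\neg\phi$ and $\sup_x\phi$ abbreviates $\neg\inf_x\neg\phi$. $\mathcal{L}_A$ is a countable fragment, $C=\{c_i:i<\omega\}$ new constants, $\mathcal{L}_A(C)$ the smallest countable fragment of $\mathcal{L}_{\omega_1,\omega}(C)$ containing $\mathcal{L}_A$, $\mathcal{L}_A^{as}(C)$ its atomic sentences, $\mathcal{T}(C)$ closed terms. A forcing property $(\mathbb{P},\le,f)$: poset with $f_p\colon\mathcal{L}_A^{as}(C)\to[0,1]$ such that (1) $p\le q\Rightarrow f_p\le f_q$; (2) for every $p$, $\varepsilon>0$, $\tau,\sigma\in\mathcal{T}(C)$, atomic $\varphi(x)$ there are $q\le p$, $c\in C$ with $f_q(d(\tau,c))<\varepsilon$, $f_q(d(\tau,\sigma))<f_p(d(\sigma,\tau))+\varepsilon$, and if $f_p(d(\tau,\sigma))<\delta_{\varphi,x}(\varepsilon)$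 then $f_q(\varphi(\sigma))<f_p(\varphi(\tau))+\varepsilon$. $F_p$: $f_p$ on atomics; $F_p(\neg\varphi)=1-\inf_{q\le p}F_q(\varphi)$; $F_p(\tfrac12\varphi)=\tfrac12F_p(\varphi)$; $F_p(\varphi\dotplus\psi)=\min(F_p(\varphi)+F_p(\psi),1)$; $F_p(\bigwedge\Phi)=\inf_{\varphi\in\Phi}F_p(\varphi)$; $F_p(\inf_x\varphi)=\inf_{c\in C}F_p(\varphi(c))$. $F^w_p(\varphi)=\sup_{q\le p}\inf_{q'\le q}F_{q'}(\varphi)$. *)

From HB Require Import structures.
From mathcomp Require Import all_boot all_order all_algebra.
From mathcomp Require Import all_classical all_reals.
Set Implicit Arguments. Unset Strict Implicit. Unset Printing Implicit Defensive.
Import Order.TTheory GRing.Theory Num.Theory.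
Local Open Scope classical_set_scope.
Local Open Scope ring_scope.

(* A countable continuous signature: function symbols (constant symbols of L
   are 0-ary function symbols) and predicate symbols, with arities.
   The distance symbol d is built into the syntax. *)
Record signature := Signature {
  funs : countType; farity : funs -> nat;
  preds : countType; parity : preds -> nat }.

Section Syntax.
Variable L : signature.

(* Terms of L(C): variables x_v (v : nat), new constants c_i (i : nat), and
   applications of function symbols of L. *)
Inductive term :=
| TVar of nat
| TConst of nat
| TApp (g : funs L) (args : 'I_(farity g) -> term).

Inductive atom :=
| ADist (t1 t2 : term)
| APred (r : preds L) (args : 'I_(parity r) -> term).
Arguments TApp : clear implicits.
Arguments APred : clear implicits.

(* Formulas of L_{omega1,omega}(C): negation, 1/2, truncated sum,
   countable (nonempty, indexed by nat) conjunctions, inf over a variable. *)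
Inductive formula :=
| FAtom of atom
| FNeg of formula
| FHalf of formula
| FPlus of formula & formula
| FConj of (nat -> formula)
| FInf of nat & formula.

Definition FOr (Phi : nat -> formula) := FNeg (FConj (fun n => FNeg (Phi n))).
Definition FSup (x : nat) (phi : formula) := FNeg (FInf x (FNeg phi)).

Fixpoint tsubst (x : nat) (s t : term) : term :=
  match t with
  | TVar v => if v == x then s else TVar v
  | TConst c => TConst c
  | TApp g a => TApp g (fun i => tsubst x s (a i))
  end.

Fixpoint tinst (rho : nat -> nat) (t : term) : term :=
  match t with
  | TVar v => TConst (rho v)
  | TConst c => TConst c
  | TApp g a => TApp g (fun i => tinst rho (a i))
  end.

Fixpoint tfree (x : nat) (t : term) : Prop :=
  match t with
  | TVar v => v = x
  | TConst _ => False
  | TApp g a => exists i, tfree x (a i)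
  end.

Fixpoint tCfree (t : term) : Prop :=
  match t with
  | TVar _ => True
  | TConst _ => False
  | TApp g a => forall i, tCfree (a i)
  end.

Definition tclosed (t : term) := forall x, ~ tfree x t.

Definition asubst (x : nat) (s : term) (a : atom) : atom :=
  match a with
  | ADist t1 t2 => ADist (tsubst x s t1) (tsubst x s t2)
  | APred r args => APred r (fun i => tsubst x s (args i))
  end.

Definition ainst (rho : nat -> nat) (a : atom) : atom :=
  match a with
  | ADist t1 t2 => ADist (tinst rho t1) (tinst rho t2)
  | APred r args => APred r (fun i => tinst rho (args i))
  end.

Definition afree (x : nat) (a : atom) : Prop :=
  match a with
  | ADist t1 t2 => tfree x t1 \/ tfree x t2
  | APred r args => exists i, tfree x (args i)
  end.

Definition aCfree (a : atom) : Prop :=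
  match a with
  | ADist t1 t2 => tCfree t1 /\ tCfree t2
  | APred r args => forall i, tCfree (args i)
  end.

Definition atomic_sentence (a : atom) := forall x, ~ afree x a.

Fixpoint fsubst (x : nat) (s : term) (phi : formula) : formula :=
  match phi with
  | FAtom a => FAtom (asubst x s a)
  | FNeg psi => FNeg (fsubst x s psi)
  | FHalf psi => FHalf (fsubst x s psi)
  | FPlus a b => FPlus (fsubst x s a) (fsubst x s b)
  | FConj Phi => FConj (fun n => fsubst x s (Phi n))
  | FInf y psi => if y == x then FInf y psi else FInf y (fsubst x s psi)
  end.

Fixpoint ffree (x : nat) (phi : formula) : Prop :=
  match phi with
  | FAtom a => afree x a
  | FNeg psi => ffree x psi
  | FHalf psi => ffree x psi
  | FPlus a b => ffree x a \/ ffree x b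
  | FConj Phi => exists n, ffree x (Phi n)
  | FInf y psi => y <> x /\ ffree x psi
  end.

Fixpoint fCfree (phi : formula) : Prop :=
  match phi with
  | FAtom a => aCfree a
  | FNeg psi => fCfree psi
  | FHalf psi => fCfree psi
  | FPlus a b => fCfree a /\ fCfree b
  | FConj Phi => forall n, fCfree (Phi n)
  | FInf _ psi => fCfree psi
  end.

Definition sentence (phi : formula) := forall x, ~ ffree x phi.

Definition imm_subformula (chi phi : formula) : Prop :=
  match phi with
  | FAtom _ => False
  | FNeg psi => chi = psi
  | FHalf psi => chi = psi
  | FInf _ psi => chi = psi
  | FPlus a b => chi = a \/ chi = b
  | FConj Phi => exists n, chi = Phi n
  end.

(* Fragments: withC = false for fragments of L_{omega1,omega} (no constants
   from C), withC = true for fragments of L_{omega1,omega}(C). *)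
Definition is_fragment (withC : bool) (S : formula -> Prop) : Prop :=
  [/\ (forall a, (withC \/ aCfree a) -> S (FAtom a)),
      (forall phi, S phi -> [/\ S (FNeg phi), S (FHalf phi) & forall x, S (FInf x phi)]),
      (forall phi psi, S phi -> S psi ->
         S (FPlus phi psi) /\ S (FConj (fun n => if n is 0 then phi else psi))),
      (forall phi chi, S phi -> imm_subformula chi phi -> S chi) &
      (forall phi x t, S phi -> tclosed t -> (withC \/ tCfree t) -> S (fsubst x t phi))].

Definition countable_set (S : formula -> Prop) :=
  exists e : nat -> formula, forall phi, S phi -> exists n, e n = phi.

Definition LAC (LA : formula -> Prop) (phi : formula) : Prop :=
  forall S, is_fragment true S -> countable_set S -> (forall psi, LA psi -> S psi) -> S phi.

End Syntax.

Section Forcing.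
Variables (L : signature) (R : realType) (P : Type) (le : P -> P -> Prop)
  (f : P -> atom L -> R).

Definition is_forcing_property (delta : atom L -> nat -> R -> R) : Prop :=
  [/\ [/\ (forall p, le p p),
      (forall p q, le p q -> le q p -> p = q) &
      (forall p q r, le p q -> le q r -> le p r)],
      (forall p a, atomic_sentence a -> 0 <= f p a <= 1),
      (forall p q a, atomic_sentence a -> le p q -> f p a <= f q a) &
      (forall p (eps : R) (tau sigma : term L) (a : atom L) (x : nat),
         0 < eps -> tclosed tau -> tclosed sigma ->
         (forall y, afree y a -> y = x) ->
         exists q c, [/\ le q p,
           f q (ADist tau (TConst L c)) < eps,
           f q (ADist tau sigma) < f p (ADist sigma tau) + eps &
           (f p (ADist tau sigma) < delta a x eps ->
              f q (asubst x sigma a) < f p (asubst x tau a) + eps)])].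

(* F_p, computed under an assignment rho of constants of C to variables *)
Fixpoint Fenv (phi : formula L) : (nat -> nat) -> P -> R :=
  match phi with
  | FAtom a => fun rho p => f p (ainst rho a)
  | FNeg psi => fun rho p => 1 - inf [set Fenv psi rho q | q in [set q | le q p]]
  | FHalf psi => fun rho p => 2^-1 * Fenv psi rho p
  | FPlus a b => fun rho p => Num.min (Fenv a rho p + Fenv b rho p) 1
  | FConj Phi => fun rho p => inf [set Fenv (Phi n) rho p | n in [set: nat]]
  | FInf x psi => fun rho p =>
      inf [set Fenv psi (fun v => if v == x then c else rho v) p | c in [set: nat]]
  end.

(* F_p(phi) for a sentence phi (the assignment is irrelevant) *)
Definition F (p : P) (phi : formula L) : R := Fenv phi (fun _ => 0%N) p.

Definition Fw (p : P) (phi : formula L) : R :=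
  sup [set inf [set F q' phi | q' in [set q' | le q' q]] | q in [set q | le q p]].

End Forcing.

(* Unfolding the abbreviations, F_p(\/Phi) = 1 - inf_{q <= p} inf_n (1 - B q n)
   and F_p(sup_x phi) = 1 - inf_{q <= p} inf_c (1 - B q c), where B q j is
   inf_{q' <= q} F_q'(phi_j), so that sup_{q <= p} B q j = F^w_p(phi_j).
   Since all forcing values lie in [0, 1], both identities reduce to the
   duality 1 - inf inf (1 - B) = sup sup B and the exchange of two suprema. *)

From HB Require Import structures.
From mathcomp Require Import all_boot all_order all_algebra.
From mathcomp Require Import all_classical all_reals.
Import Order.TTheory GRing.Theory Num.Theory.

Set Implicit Arguments.
Unset Strict Implicit.
Unset Printing Implicit Defensive.
Local Open Scope classical_set_scope.
Local Open Scope ring_scope.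

Section InfSup.
Variable R : realType.

Lemma inf_in01 (S : set R) :
  S !=set0 -> (forall x, S x -> 0 <= x <= 1) -> 0 <= inf S <= 1.
Proof.
move=> [x0 Sx0] S01; apply/andP; split.
  by apply: lb_le_inf; [exists x0 | move=> x /S01 /andP[]].
apply: le_trans (_ : x0 <= 1); last by case/andP: (S01 _ Sx0).
by apply: ge_inf => //; exists 0 => x /S01 /andP[].
Qed.

Lemma inf_image_oneminus (T : Type) (S : set T) (g : T -> R) :
  S !=set0 -> has_ubound (g @` S) ->
  inf [set 1 - g i | i in S] = 1 - sup (g @` S).
Proof.
move=> S0 ubg; rewrite /inf.
have -> : -%R @` [set 1 - g i | i in S] = [set x + y | x in g @` S & y in [set -1]].
  apply/seteqP; split=> y.
    by move=> [_ [i Si <-] <-]; exists (g i); [exists i | exists (-1); rewrite // opprB addrC].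
  by move=> [_ [i Si <-] [_ -> <-]]; exists (1 - g i); [exists i | rewrite opprB addrC].
rewrite sup_sumE; first by rewrite sup1 opprD opprK addrC.
- by split; [case: S0 => i Si; exists (g i), i|].
- by split; [exists (-1) | exists (-1) => _ ->].
Qed.

Variables (I J : Type) (Q : set I) (N : set J) (A : I -> J -> R) (M : R).
Hypotheses (Q0 : Q !=set0) (N0 : N !=set0) (A_le : forall q j, Q q -> N j -> A q j <= M).

Lemma sup_sup_le :
  sup [set sup [set A q j | j in N] | q in Q] <=
  sup [set sup [set A q j | q in Q] | j in N].
Proof.
have [[q0 Qq0] [j0 Nj0]] := (Q0, N0).
have ubQ j : N j -> has_ubound [set A q j | q in Q].
  by move=> Nj; exists M => _ [q Qq <-]; apply: A_le.
have ubQN : has_ubound [set sup [set A q j | q in Q] | j in N].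
  exists M => _ [j Nj <-]; apply: ge_sup; first by exists (A q0 j), q0.
  by move=> _ [q Qq <-]; apply: A_le.
apply: ge_sup; first by exists (sup [set A q0 j | j in N]), q0.
move=> _ [q Qq <-]; apply: ge_sup; first by exists (A q j0), j0.
move=> _ [j Nj <-]; apply: le_trans (_ : sup [set A q' j | q' in Q] <= _).
  by apply: ub_le_sup; [exact: ubQ | exists q].
by apply: ub_le_sup => //; exists j.
Qed.

End InfSup.

Section DoubleSup.
Variables (R : realType) (I J : Type) (Q : set I) (N : set J) (A : I -> J -> R) (M : R).
Hypotheses (Q0 : Q !=set0) (N0 : N !=set0) (A_le : forall q j, Q q -> N j -> A q j <= M).

Lemma sup_supC :
  sup [set sup [set A q j | j in N] | q in Q] =
  sup [set sup [set A q j | q in Q] | j in N].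
Proof.
apply: le_anti; rewrite (sup_sup_le Q0 N0 A_le) /=.
by apply: (sup_sup_le (A := fun j q => A q j) N0 Q0) => j q Nj Qq; apply: A_le.
Qed.

Lemma oneminus_inf_inf_oneminus :
  1 - inf [set inf [set 1 - A q j | j in N] | q in Q] =
  sup [set sup [set A q j | q in Q] | j in N].
Proof.
have ubN q : Q q -> has_ubound [set A q j | j in N].
  by move=> Qq; exists M => _ [j Nj <-]; apply: A_le.
rewrite (eq_imagel (fun q Qq => inf_image_oneminus N0 (ubN q Qq))).
rewrite inf_image_oneminus; first by rewrite opprB addrC subrK; exact: sup_supC.
- by case: Q0 => q Qq; exists q.
- exists M => _ [q Qq <-]; apply: ge_sup; first by case: N0 => j Nj; exists (A q j), j.
  by move=> _ [j Nj <-]; apply: A_le.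
Qed.

End DoubleSup.

Section Forcing.
Variables (L : signature) (R : realType) (P : Type) (le : P -> P -> Prop)
  (f : P -> atom L -> R).

Lemma tinst_closed rho (t : term L) x : ~ tfree x (tinst rho t).
Proof. by elim: t => [v|c|g a IH] //= [i]; apply: IH. Qed.

Lemma ainst_atomic_sentence rho (a : atom L) : atomic_sentence (ainst rho a).
Proof. by case: a => [t1 t2|r args] x /= => [[]|[i]]; apply: tinst_closed. Qed.

Lemma tinst_subst rho x c (t : term L) :
  tinst rho (tsubst x (TConst L c) t) = tinst (fun v => if v == x then c else rho v) t.
Proof.
elim: t => [v|d|g a IH] //=; first by case: eqP.
by congr TApp; apply: funext => i; apply: IH.
Qed.

Lemma Fenv_subst x c (phi : formula L) rho p :
  Fenv le f (fsubst x (TConst L c) phi) rho p =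
  Fenv le f phi (fun v => if v == x then c else rho v) p.
Proof.
elim: phi rho p => [a|psi IH|psi IH|a IHa b IHb|Phi IH|y psi IH] rho p /=.
- congr (f p _); case: a => [t1 t2|r args] /=; first by rewrite !tinst_subst.
  by congr APred; apply: funext => i; rewrite tinst_subst.
- by congr (1 - inf _); apply: eq_imagel => q _; apply: IH.
- by rewrite IH.
- by rewrite IHa IHb.
- by congr inf; apply: eq_imagel => n _; apply: IH.
- case: eqP => [->|yx] /=; congr inf; apply: eq_imagel => d _.
    by congr Fenv; apply: funext => v; case: eqP.
  rewrite IH; congr Fenv; apply: funext => v.
  case: (eqVneq v x) => [vx|vx]; case: (eqVneq v y) => [vy|vy] //.
  by move: yx; rewrite -vx -vy.
Qed.

Hypotheses (le_refl : forall p, le p p)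
  (f_in01 : forall p a, atomic_sentence a -> 0 <= f p a <= 1).

Lemma Fenv_in01 (phi : formula L) rho p : 0 <= Fenv le f phi rho p <= 1.
Proof.
elim: phi rho p => [a|psi IH|psi IH|a IHa b IHb|Phi IH|y psi IH] rho p /=.
- exact/f_in01/ainst_atomic_sentence.
- have /andP[inf_ge0 inf_le1] :
      0 <= inf [set Fenv le f psi rho q | q in [set q | le q p]] <= 1.
    by apply: inf_in01 => [|_ [q _ <-]]; [exists (Fenv le f psi rho p), p|].
  by rewrite subr_ge0 inf_le1 lerBlDr lerDl.
- have /andP[ge0 le1] := IH rho p.
  rewrite mulr_ge0 ?invr_ge0 //= -[leRHS]mulr1 ler_pM ?invr_ge0 //.
  by rewrite invf_le1 ?ler1n.
- have /andP[a_ge0 _] := IHa rho p; have /andP[b_ge0 _] := IHb rho p.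
  by rewrite ge_min lexx orbT le_min ler01 addr_ge0.
- by apply: inf_in01 => [|_ [n _ <-]]; [exists (Fenv le f (Phi 0) rho p), 0%N|].
- by apply: inf_in01 => [|_ [c _ <-]]; [eexists; exists 0%N|].
Qed.

Lemma inf_below_Fenv_le1 (phi : formula L) rho q :
  inf [set Fenv le f phi rho q' | q' in [set q' | le q' q]] <= 1.
Proof.
apply: le_trans (_ : Fenv le f phi rho q <= 1); last by case/andP: (Fenv_in01 phi rho q).
apply: ge_inf; last by exists q.
by exists 0 => _ [q' _ <-]; case/andP: (Fenv_in01 phi rho q').
Qed.

Lemma F_Or p (Phi : nat -> formula L) :
  F le f p (FOr Phi) = sup [set Fw le f p (Phi n) | n in [set: nat]].
Proof.
by apply: (oneminus_inf_inf_oneminus (M := 1)) => [|//|q n _ _];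
  [exists p | exact: inf_below_Fenv_le1].
Qed.

Lemma F_Sup p x (phi : formula L) :
  F le f p (FSup x phi) =
  sup [set Fw le f p (fsubst x (TConst L c) phi) | c in [set: nat]].
Proof.
rewrite /Fw /F; under eq_imagel do under eq_imagel do
  under eq_imagel do rewrite Fenv_subst.
by apply: (oneminus_inf_inf_oneminus (M := 1)) => [|//|q c _ _];
  [exists p | exact: inf_below_Fenv_le1].
Qed.

End Forcing.

Theorem proposition4p1 (L : signature) (R : realType) (LA : formula L -> Prop)
  (P : Type) (le : P -> P -> Prop) (f : P -> atom L -> R)
  (delta : atom L -> nat -> R -> R) :
  is_fragment false LA -> countable_set LA -> (forall phi, LA phi -> fCfree phi) ->
  is_forcing_property le f delta ->
  forall p : P,
  (forall Phi : nat -> formula L, LAC LA (FOr Phi) -> sentence (FOr Phi) ->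
     F le f p (FOr Phi) = sup [set Fw le f p (Phi n) | n in [set: nat]]) /\
  (forall (x : nat) (phi : formula L), LAC LA (FSup x phi) -> sentence (FSup x phi) ->
     F le f p (FSup x phi) =
       sup [set Fw le f p (fsubst x (TConst L c) phi) | c in [set: nat]]).
Proof.
move=> _ _ _ [[le_refl _ _] f_in01 _ _] p.
by split=> [Phi|x phi] _ _; [exact: F_Or | exact: F_Sup].
Qed.
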